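(* Let $p$ be a prime and let $L$ be a locally compact abelian group of exponent $p$ (every non-identity element has order $p$). If $\nabla$ is a symplectic self-duality of $L$, then $(L,\nabla)$ is standard.
   Context: $\mathbf T=\mathbf R/\mathbf Z$; $\hat L$ is the Pontryagin dual of $L$ (continuous homomorphisms $L\to\mathbf T$, compact-open topology). A symplectic self-duality of $L$ is an isomorphism of topological groups $\nabla:L\to\hat L$ with $\nabla(x)(x)=0$ for all $x\in L$. For an LCA group $A$, the standard symplectic self-duality of $A\times\hat A$ is $\nabla^0(x,\chi)(y,\lambda)=\chi(y)-\lambda(x)$. $(L,\nabla)$ is standard if there exist an LCA group $A$ and an isomorphism of topological groups $\phi:A\times\hat A\to L$ with $\nabla(\phi(u))(\phi(v))=\nabla^0(u)(v)$ for all $u,v\in A\times\hat A$. *)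

From HB Require Import structures.
From mathcomp Require Import all_boot all_order all_algebra.
From mathcomp Require Import all_classical all_reals all_analysis.
From mathcomp Require Import Rstruct Rstruct_topology generic_quotient.
Set Implicit Arguments. Unset Strict Implicit. Unset Printing Implicit Defensive.
Import Order.TTheory GRing.Theory Num.Theory.
Local Open Scope classical_set_scope.
Local Open Scope ring_scope.

Definition circ_r (x y : Rdefinitions.R) : bool := (x - y) \is a Num.int.

Lemma circ_r_refl : reflexive circ_r.
Proof. by move=> x; rewrite /circ_r subrr rpred0. Qed.
Lemma circ_r_sym : symmetric circ_r.
Proof. by move=> x y; rewrite /circ_r -opprB rpredN. Qed.
Lemma circ_r_trans : transitive circ_r.
Proof.
move=> y x z hxy hyz; rewrite /circ_r.
have -> : x - z = (x - y) + (y - z) by rewrite addrA subrK.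
exact: rpredD.
Qed.

Canonical circ_equiv := EquivRel circ_r circ_r_refl circ_r_sym circ_r_trans.

Local Open Scope quotient_scope.
Definition circ_quot := {eq_quot circ_equiv}.
Definition T : topologicalType := quotient_topology circ_quot.

Definition piT (x : Rdefinitions.R) : T := \pi_circ_quot x.
Definition addT (a b : T) : T := piT (repr a + repr b).
Definition oppT (a : T) : T := piT (- repr a).
Definition subT (a b : T) : T := addT a (oppT b).
Definition zeroT : T := piT 0.

Definition LCA (L : topologicalZmodType) : Prop :=
  hausdorff_space L /\ locally_compact [set: L].

Definition is_char (L : topologicalZmodType) (f : L -> T) : Prop :=
  continuous f /\ forall x y : L, f (x + y) = addT (f x) (f y).

Definition chars (L : topologicalZmodType) : set {compact-open, L -> T} :=
  [set f | is_char f].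

(* \hat L : the characters, with the subspace topology of the compact-open
   topology on L -> T; its group law is pointwise addition in T. *)
Definition dual (L : topologicalZmodType) : topologicalType :=
  set_type (@chars L).

Definition dual_val (L : topologicalZmodType) (chi : dual L) : L -> T :=
  set_val chi.

Definition homeomorphism (X Y : topologicalType) (f : X -> Y) : Prop :=
  continuous f /\
  exists g : Y -> X, [/\ cancel f g, cancel g f & continuous g].

Definition symplectic_self_duality (L : topologicalZmodType)
    (nabla : L -> dual L) : Prop :=
  [/\ homeomorphism nabla,
      (forall x y z : L,
          dual_val (nabla (x + y)) z =
          addT (dual_val (nabla x) z) (dual_val (nabla y) z))
    & forall x : L, dual_val (nabla x) x = zeroT].

Definition std_nabla (A : topologicalZmodType) (u v : A * dual A) : T :=
  subT (dual_val u.2 v.1) (dual_val v.2 u.1).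

Definition is_standard (L : topologicalZmodType) (nabla : L -> dual L) : Prop :=
  exists (A : topologicalZmodType) (phi : (A * dual A)%type -> L),
    [/\ LCA A,
        homeomorphism phi,
        (* phi is a group homomorphism, A x \hat A carrying the
           componentwise law (pointwise addition on \hat A) *)
        (forall u v w : (A * dual A)%type,
            w.1 = u.1 + v.1 ->
            (forall a : A, dual_val w.2 a = addT (dual_val u.2 a) (dual_val v.2 a)) ->
            phi w = phi u + phi v)
      & forall u v : (A * dual A)%type,
          dual_val (nabla (phi u)) (phi v) = std_nabla u v].

From HB Require Import structures.
From mathcomp Require Import all_boot all_order all_algebra.
From mathcomp Require Import all_classical all_reals all_analysis.
From mathcomp Require Import Rstruct Rstruct_topology generic_quotient.
From mathcomp Require Import ring.
Set Implicit Arguments. Unset Strict Implicit. Unset Printing Implicit Defensive.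
Import Order.TTheory GRing.Theory Num.Theory.
Local Open Scope classical_set_scope.
Local Open Scope ring_scope.

(* Write omega x y := nabla x y, an alternating biadditive pairing identifying L with its
   dual. As L has exponent p, characters take values in p^-1 Z / Z, so a character that is
   uniformly small on a compact set vanishes on it: annihilators of compact sets are open.
   For a compact neighbourhood V of 0 and a compact K with perp K contained in V, the
   subgroup perp K `&` perp V is open and isotropic, and Zorn's lemma enlarges it to an open
   Lagrangian M = perp M. Subgroups of an F_p-vector space have complements, so additive maps
   on a subgroup B disjoint from M extend to characters vanishing on M; a second use of Zorn's
   lemma then gives an isotropic complement B of M. Finally B is discrete, omega identifies
   M with the dual of B, and b + m |-> (b, omega m restricted to B) makes (L, nabla) standard
   with A = B. *)

Section CircleGroup.
Local Open Scope quotient_scope.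

Lemma piT_eq (x y : Rdefinitions.R) : piT x = piT y <-> (x - y) \is a Num.int.
Proof. by split=> [/eqmodP | h]; last apply/eqmodP. Qed.

Lemma piT_surj (t : T) : exists r, t = piT r.
Proof. by exists (repr t); rewrite /piT reprK. Qed.

Lemma piT_repr (x : Rdefinitions.R) : (repr (piT x) - x) \is a Num.int.
Proof. by apply/piT_eq; rewrite /piT reprK. Qed.

Lemma piTD x y : piT (x + y) = addT (piT x) (piT y).
Proof.
apply/piT_eq; have dx := piT_repr x; have dy := piT_repr y.
have -> : x + y - (repr (piT x) + repr (piT y)) =
   - ((repr (piT x) - x) + (repr (piT y) - y)) by ring.
by rewrite rpredN rpredD.
Qed.

Lemma piTN x : piT (- x) = oppT (piT x).
Proof.
apply/piT_eq; have dx := piT_repr x.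
by have -> : - x - - repr (piT x) = repr (piT x) - x by ring.
Qed.

End CircleGroup.

Lemma addTA : associative addT.
Proof.
move=> a b c; have [x ->] := piT_surj a; have [y ->] := piT_surj b.
by have [z ->] := piT_surj c; rewrite -!piTD addrA.
Qed.

Lemma addTC : commutative addT.
Proof.
move=> a b; have [x ->] := piT_surj a; have [y ->] := piT_surj b.
by rewrite -!piTD addrC.
Qed.

Lemma add0T : left_id zeroT addT.
Proof. by move=> a; have [x ->] := piT_surj a; rewrite /zeroT -piTD add0r. Qed.

Lemma addT0 : right_id zeroT addT.
Proof. by move=> a; rewrite addTC add0T. Qed.

Lemma addNT : left_inverse zeroT oppT addT.
Proof. by move=> a; have [x ->] := piT_surj a; rewrite -piTN -piTD addNr. Qed.

Lemma addTN : right_inverse zeroT oppT addT.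
Proof. by move=> a; rewrite addTC addNT. Qed.

Lemma addTI a : injective (addT a).
Proof. by move=> b c h; rewrite -[b]add0T -(addNT a) -addTA h addTA addNT add0T. Qed.

Lemma addT_eq0 a b : addT a b = zeroT -> b = oppT a.
Proof. by move=> h; apply: (@addTI a); rewrite h addTN. Qed.

Lemma oppT0 : oppT zeroT = zeroT.
Proof. by rewrite /zeroT -piTN oppr0. Qed.

Lemma oppTD a b : oppT (addT a b) = addT (oppT a) (oppT b).
Proof.
have [x ->] := piT_surj a; have [y ->] := piT_surj b.
by rewrite -piTD -!piTN -piTD opprD.
Qed.

Section Subgroups.
Variable V : zmodType.

Definition subgroup (S : set V) := S 0 /\ forall x y, S x -> S y -> S (x - y).

Lemma subgroupN S x : subgroup S -> S x -> S (- x).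
Proof. by case=> S0 SB Sx; rewrite -sub0r; apply: SB. Qed.

Lemma subgroupD S x y : subgroup S -> S x -> S y -> S (x + y).
Proof. by move=> hS Sx Sy; rewrite -[y]opprK; apply: hS.2 => //; apply: subgroupN. Qed.

Lemma subgroupMn S x n : subgroup S -> S x -> S (x *+ n).
Proof.
move=> hS Sx; elim: n => [|n IH]; first by rewrite mulr0n; case: hS.
by rewrite mulrS; apply: subgroupD.
Qed.

Lemma subgroupMz S x k : subgroup S -> S x -> S (x *~ k).
Proof.
move=> hS Sx; case: k => n; first by rewrite -pmulrn; apply: subgroupMn.
by rewrite NegzE mulrNz; apply: subgroupN => //; rewrite -pmulrn; apply: subgroupMn.
Qed.

Definition adjoin (S : set V) (x : V) := [set s + x *~ k | s in S & k in [set: int]].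

Lemma subgroup_adjoin S x : subgroup S -> subgroup (adjoin S x).
Proof.
move=> hS; split; first by exists 0 => //; [case: hS | exists 0; rewrite // mulr0z addr0].
move=> _ _ [s Ss [k _ <-]] [t St [l _ <-]].
exists (s - t); first exact: hS.2.
by exists (k - l) => //; rewrite mulrzBr opprD addrACA.
Qed.

Lemma sub_adjoin S x : S `<=` adjoin S x.
Proof. by move=> s Ss; exists s => //; exists 0; rewrite // mulr0z addr0. Qed.

Lemma adjoin_self S x : subgroup S -> adjoin S x x.
Proof. by case=> S0 _; exists 0 => //; exists 1; rewrite // mulr1z add0r. Qed.

Lemma adjoin_min S Z x : subgroup Z -> S `<=` Z -> Z x -> adjoin S x `<=` Z.
Proof.
move=> hZ SZ Zx _ [s Ss [k _ <-]]; apply: subgroupD => //; first exact: SZ.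
exact: subgroupMz.
Qed.

Definition sumset (B M : set V) := [set b + m | b in B & m in M].

Lemma subgroup_sumset B M : subgroup B -> subgroup M -> subgroup (sumset B M).
Proof.
move=> hB hM; split; first by exists 0; [case: hB | exists 0; [case: hM | rewrite addr0]].
move=> _ _ [b Bb [m Mm <-]] [b' Bb' [m' Mm' <-]].
exists (b - b'); first exact: hB.2.
by exists (m - m'); [exact: hM.2 | rewrite opprD addrACA].
Qed.

Lemma subgroup_bigcup_chain (F : set (set V)) :
  F !=set0 -> (forall X, F X -> subgroup X) -> total_on F subset ->
  subgroup (\bigcup_(X in F) X).
Proof.
move=> [X0 FX0] FS tot; split; first by exists X0 => //; case: (FS X0 FX0).
move=> x y [X FX Xx] [Y FY Yy].
have [XY|YX] := tot X Y FX FY.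
  by exists Y => //; apply: (FS Y FY).2 => //; apply: XY.
by exists X => //; apply: (FS X FX).2 => //; apply: YX.
Qed.

End Subgroups.

(* The empty chain is excluded, so [P] need not contain [set0]. *)
Lemma Zorn_bigcup_nonempty T (P : set (set T)) (S0 : set T) :
  S0 !=set0 -> P S0 ->
  (forall F : set (set T), F !=set0 -> F `<=` P -> total_on F subset ->
      P (\bigcup_(X in F) X)) ->
  exists A, P A /\ forall B, A `<` B -> ~ P B.
Proof.
move=> [s0 S0s0] PS0 hch.
pose P' := fun X : set T => X = set0 \/ P X.
have [A [P'A Amax]] : exists A, P' A /\ forall B, A `<` B -> ~ P' B.
  apply: Zorn_bigcup => F FP' tot.
  have [[X [FX [x Xx]]]|F0] := pselect (exists X, F X /\ X !=set0); last first.
    left; apply/seteqP; split => x // [X FX Xx]; exfalso; apply: F0.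
    by exists X; split => //; exists x.
  right; pose F1 := [set X | F X /\ X !=set0].
  have -> : \bigcup_(X in F) X = \bigcup_(X in F1) X.
    apply/seteqP; split => y [Y FY Yy]; last by exists Y => //; case: FY.
    by exists Y => //; split => //; exists y.
  apply: hch; first by exists X; split => //; exists x.
  - by move=> Y [FY [y Yy]]; case: (FP' Y FY) => // Y0; rewrite Y0 in Yy.
  - by move=> Y Z [FY _] [FZ _]; apply: tot.
exists A; split => [|B AB PB]; last by apply: (Amax B AB); right.
case: P'A => // A0; exfalso; apply: (Amax S0); last by right.
by rewrite A0; split; [exact: sub0set | move=> /(_ s0 S0s0)].
Qed.

Section Projection.
Variables (V : zmodType) (B N : set V).
Hypothesis BN_sum : forall z, sumset B N z.

Lemma proj_subproof z : exists b, B b /\ N (z - b).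
Proof. by have [b Bb [n Nn <-]] := BN_sum z; exists b; rewrite addrC addKr. Qed.

Definition proj z : V := projT1 (cid (proj_subproof z)).

Lemma projP z : B (proj z) /\ N (z - proj z).
Proof. exact: projT2 (cid (proj_subproof z)). Qed.

Hypothesis B_subgroup : subgroup B.
Hypothesis N_subgroup : subgroup N.
Hypothesis BN_disjoint : forall y, B y -> N y -> y = 0.

Lemma proj_eq z b : B b -> N (z - b) -> proj z = b.
Proof.
move=> Bb Nzb; have [Bq Nzq] := projP z.
apply/eqP; rewrite -subr_eq0; apply/eqP; apply: BN_disjoint; first exact: B_subgroup.2.
have -> : proj z - b = (z - b) - (z - proj z) by rewrite opprB [RHS]addrC addrA subrK.
exact: N_subgroup.2.
Qed.

Lemma proj_id b : B b -> proj b = b.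
Proof. by move=> Bb; apply: proj_eq; rewrite // subrr; case: N_subgroup. Qed.

Lemma proj_addr z n : N n -> proj (z + n) = proj z.
Proof.
move=> Nn; have [Bq Nzq] := projP z; apply: proj_eq => //.
by rewrite addrAC; apply: subgroupD.
Qed.

Lemma projD z w : proj (z + w) = proj z + proj w.
Proof.
have [Bz Nz] := projP z; have [Bw Nw] := projP w.
apply: proj_eq; first exact: subgroupD.
by rewrite opprD addrACA; apply: subgroupD.
Qed.

End Projection.

Section PrimeExponent.
Variables (V : zmodType) (p : nat).
Hypothesis p_prime : prime p.
Hypothesis expV : forall x : V, x *+ p = 0.

Lemma mulrz_pmul (x : V) t : x *~ (p%:Z * t) = 0.
Proof. by rewrite mulrzA -pmulrn expV mul0rz. Qed.

(* Bezout: [x] is an integer combination of [x *~ k] and [x *~ p]. *)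
Lemma subgroup_mulz_coprime (S : set V) x k :
  subgroup S -> S (x *~ k) -> ~~ (p%:Z %| k)%Z -> S x.
Proof.
move=> hS Sxk ndk; have [u [v huv]] := Bezoutz k p%:Z.
have g1 : gcdz k p%:Z = 1.
  by apply/eqP; rewrite -/(coprimez k p%:Z) coprimezE /= coprime_sym prime_coprime.
have -> : x = x *~ k *~ u + x *~ (p%:Z * v).
  by rewrite -[LHS]mulr1z -g1 -huv mulrzDr (mulrC v) mulrzA_C.
by rewrite mulrz_pmul addr0; apply: subgroupMz.
Qed.

Lemma adjoin_disjoint (C H : set V) x :
  subgroup C -> subgroup H -> (forall y, C y -> H y -> y = 0) ->
  ~ sumset H C x -> forall y, adjoin C x y -> H y -> y = 0.
Proof.
move=> hC hH disj nx _ [c Cc [k _ <-]] Hy.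
have [/dvdzP[t kE]|ndk] := boolP (p%:Z %| k)%Z.
  by move: Hy; rewrite kE (mulrC t) mulrz_pmul addr0; apply: disj.
exfalso; apply: nx; apply: (@subgroup_mulz_coprime _ x k) => //.
  exact: subgroup_sumset.
exists (c + x *~ k) => //; exists (- c); first exact: subgroupN.
by rewrite addrC addKr.
Qed.

Lemma exists_complement (H : set V) : subgroup H ->
  exists C, [/\ subgroup C, (forall y, C y -> H y -> y = 0) &
                forall x, sumset H C x].
Proof.
move=> hH.
pose P := fun C : set V => subgroup C /\ (forall y, C y -> H y -> y = 0).
have [||F F0 FP tot|C [[hC disj] Cmax]] := @Zorn_bigcup_nonempty _ P [set 0].
- by exists 0.
- split; first by split => // x y -> ->; rewrite subr0.
  by move=> y ->.
- split; first by apply: subgroup_bigcup_chain => // X /FP [].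
  by move=> y [X FX Xy] Hy; apply: (FP X FX).2.
exists C; split => // x; apply: contrapT => nx.
apply: (Cmax (adjoin C x)); last first.
  by split; [exact: subgroup_adjoin | exact: adjoin_disjoint].
split; first exact: sub_adjoin.
move=> /(_ x (adjoin_self x hC)) Cx; apply: nx.
by exists 0; [case: hH | exists x; rewrite ?add0r].
Qed.

Lemma exists_complement_containing (B M : set V) :
  subgroup B -> subgroup M -> (forall y, B y -> M y -> y = 0) ->
  exists N, [/\ subgroup N, M `<=` N, (forall y, B y -> N y -> y = 0)
              & forall z, sumset B N z].
Proof.
move=> sB sM BM0.
have [C [sC CBM0 BMC]] := exists_complement (subgroup_sumset sB sM).
exists (sumset M C); split.
- exact: subgroup_sumset.
- by move=> m Mm; exists m => //; exists 0; [case: sC | rewrite addr0].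
- move=> y By [m Mm [c Cc ymc]]; rewrite -ymc in By *.
  have c0 : c = 0.
    apply: CBM0 => //; exists (m + c) => //; exists (- m); first exact: subgroupN.
    by rewrite addrC addKr.
  by move: By; rewrite c0 !addr0 => Bm; apply: BM0.
- move=> z; have [_ [b Bb [m Mm <-]] [c Cc <-]] := BMC z.
  by exists b => //; exists (m + c); [exists m => //; exists c | rewrite addrA].
Qed.

End PrimeExponent.

Section Characters.
Variable M : topologicalZmodType.

Lemma dual_valP (chi : dual M) : is_char (dual_val chi).
Proof. exact: (set_mem (valP chi)). Qed.

Lemma is_char0 (f : M -> T) : is_char f -> f 0 = zeroT.
Proof. by case=> _ fD; apply/esym/(@addTI (f 0)); rewrite addT0 -fD addr0. Qed.

Lemma is_charN (f : M -> T) x : is_char f -> f (- x) = oppT (f x).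
Proof. by move=> hf; apply: addT_eq0; rewrite -hf.2 subrr; apply: is_char0. Qed.

Lemma is_charMn (f : M -> T) x r n :
  is_char f -> f x = piT r -> f (x *+ n) = piT (r *+ n).
Proof.
move=> hf fx; elim: n => [|n IH]; first by rewrite !mulr0n (is_char0 hf).
by rewrite !mulrS hf.2 fx IH piTD.
Qed.

Definition char_of (f : M -> T) (hf : is_char f) : dual M :=
  @exist {compact-open, M -> T} (fun h => h \in @chars M) f (mem_set (hf : chars f)).

End Characters.

Section DualMap.
Variables (X Y : topologicalZmodType) (h : X -> Y).
Hypothesis h_cont : continuous h.
Hypothesis hD : forall a b, h (a + b) = h a + h b.

Lemma is_char_comp (chi : dual Y) : is_char (dual_val chi \o h).
Proof.
split; first by move=> x; apply: continuous_comp; [exact: h_cont | exact: (dual_valP chi).1].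
by move=> a b /=; rewrite hD (dual_valP chi).2.
Qed.

Definition dualmap (chi : dual Y) : dual X := char_of (is_char_comp chi).

Lemma dualmapE chi x : dual_val (dualmap chi) x = dual_val chi (h x).
Proof. by []. Qed.

Lemma dualmap_continuous : continuous dualmap.
Proof.
apply: (@continuous_comp_initial _ _ _ (@set_val _ (@chars X)) dualmap) => chi.
have FF : Filter ((set_val \o dualmap) @ chi) by apply: fmap_filter; exact: nbhs_filter.
apply/(compact_open_cvgP _ FF) => K O cK oO hKO.
have chK : compact (h @` K).
  by apply: continuous_compact => //; exact: continuous_subspaceT.
pose S := [set f : {compact-open, Y -> T} | f @` (h @` K) `<=` O].
have Schi : S (set_val chi) by move=> _ [_ [k Kk <-] <-]; apply: hKO; exists k.
have nS : nbhs chi (set_val @^-1` S : set (dual Y)).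
  apply: (@initial_continuous _ _ (@set_val _ (@chars Y)) chi S).
  exact: open_nbhs_nbhs (conj (compact_open_open chK oO) Schi).
apply: filterS nS => c Sc _ [k Kk <-].
by apply: Sc; exists (h k) => //; exists k.
Qed.

End DualMap.

Section LocallyConstant.
Variable L : topologicalZmodType.

Lemma nbhs_translate (M : set L) x : nbhs 0 M -> nbhs x [set y | M (y - x)].
Proof.
move=> M0; have Mx : nbhs (x - x) M by rewrite subrr.
have sub_cont : continuous (fun y : L => y - x).
  move=> y; apply: (@continuous_comp _ _ _ (fun y => (y, x)) (fun z : L * L => z.1 - z.2)).
    by apply: cvg_pair; [exact: cvg_id | exact: cvg_cst].
  exact: sub_continuous.
exact: sub_cont Mx.
Qed.

Lemma continuous_periodic (M : set L) (Y : topologicalType) (f : L -> Y) :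
  nbhs 0 M -> (forall x m, M m -> f (x + m) = f x) -> continuous f.
Proof.
move=> M0 fM x W fxW /=; apply: filterS (nbhs_translate x M0) => y /= Myx.
by rewrite -(subrKC x y) fM //; apply: nbhs_singleton.
Qed.

End LocallyConstant.

Lemma continuous_discrete (X : discreteTopologicalType) (Y : topologicalType) (f : X -> Y) :
  continuous f.
Proof.
by move=> x W fxW; apply: filterS (discrete_set1 x) => y ->; exact: nbhs_singleton fxW.
Qed.

Lemma continuous_discrete2 (X1 X2 : discreteTopologicalType) (Y : topologicalType)
    (f : X1 * X2 -> Y) : continuous f.
Proof.
move=> [x1 x2] W fxW; exists ([set x1], [set x2]); first by split; apply: discrete_set1.
by move=> [y1 y2] [/= -> ->]; exact: nbhs_singleton fxW.
Qed.

Record subgroupType (V : zmodType) := SubgroupType { sgset :> set V; sgsetP : subgroup sgset }.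

Section DiscreteSubgroup.
Variables (V : zmodType) (S : subgroupType V).

Definition subgroup_elt := set_type S.
HB.instance Definition _ := Choice.copy subgroup_elt (set_type S).

Definition sg_zero : subgroup_elt := exist _ 0 (mem_set (sgsetP S).1).
Definition sg_opp (a : subgroup_elt) : subgroup_elt :=
  exist _ (- val a) (mem_set (subgroupN (sgsetP S) (set_mem (valP a)))).
Definition sg_add (a b : subgroup_elt) : subgroup_elt :=
  exist _ (val a + val b)
    (mem_set (subgroupD (sgsetP S) (set_mem (valP a)) (set_mem (valP b)))).

Lemma sg_addA : associative sg_add.
Proof. by move=> a b c; apply: val_inj; rewrite /= addrA. Qed.
Lemma sg_addC : commutative sg_add.
Proof. by move=> a b; apply: val_inj; rewrite /= addrC. Qed.
Lemma sg_add0 : left_id sg_zero sg_add.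
Proof. by move=> a; apply: val_inj; rewrite /= add0r. Qed.
Lemma sg_addN : left_inverse sg_zero sg_opp sg_add.
Proof. by move=> a; apply: val_inj; rewrite /= addNr. Qed.

HB.instance Definition _ := GRing.isZmodule.Build subgroup_elt sg_addA sg_addC sg_add0 sg_addN.

Local Notation discrete_subgroup := (discrete_topology subgroup_elt).
HB.instance Definition _ := GRing.Zmodule.copy discrete_subgroup subgroup_elt.
HB.instance Definition _ := PreTopologicalNmodule_isTopologicalZmodule.Build
  discrete_subgroup
  (@continuous_discrete2 _ _ _ (fun x : discrete_subgroup * discrete_subgroup => x.1 - x.2)).

Lemma LCA_discrete_subgroup : LCA discrete_subgroup.
Proof.
split; first exact: discrete_hausdorff.
move=> x _; exists [set x]; first by rewrite /within /= nbhs_principalE => y ->.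
by split; [exact: compact_set1 | exact: discrete_closed].
Qed.

End DiscreteSubgroup.

Notation discrete_subgroup S := (discrete_topology (subgroup_elt S)).

Lemma int_norm_lt1 (z : Rdefinitions.R) : z \is a Num.int -> `|z| < 1 -> z = 0.
Proof.
case/intrP => m ->; rewrite -intr_norm; have [->//|m0] := eqVneq m 0.
by rewrite -[1]/(1%:~R) ltr_int ltNge -gtz0_ge1 normr_gt0 m0.
Qed.

Section SmallArc.
Variable p : nat.
Hypothesis p_gt0 : (0 < p)%N.

Definition small_arc : set T :=
  [set t | exists r : Rdefinitions.R, t = piT r /\ `|r| < p%:R^-1].

Lemma small_arc0 : small_arc zeroT.
Proof. by exists 0; split => //; rewrite normr0 invr_gt0 ltr0n. Qed.

Lemma open_small_arc : open small_arc.
Proof.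
rewrite /open /= /quotient_open /= openE => x /= [r [xr rp]].
change (piT x = piT r) in xr.
apply/nbhs_ballP; exists (p%:R^-1 - `|r|); first by rewrite /= subr_gt0.
move=> y; rewrite /ball /= => yx; change (small_arc (piT y)).
exists (r + (y - x)); split.
  by apply/piT_eq; move/piT_eq: xr; have -> : y - (r + (y - x)) = x - r by ring.
by rewrite (le_lt_trans (ler_normD _ _)) // -ltrBrDl -normrN opprB.
Qed.

(* On a group of exponent [p], characters take values in [p^-1 Z / Z], which meets
   [small_arc] only in [0]. *)
Lemma is_char_small (M : topologicalZmodType) (f : M -> T) x :
  (forall y : M, y *+ p = 0) -> is_char f -> small_arc (f x) -> f x = zeroT.
Proof.
move=> expM hf [r [fx rp]].
have := is_charMn p hf fx; rewrite expM (is_char0 hf) => /esym/piT_eq.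
rewrite subr0 => rp_int.
have /eqP : r *+ p = 0.
  apply: int_norm_lt1 => //; rewrite normrMn -mulr_natr.
  by rewrite -ltr_pdivlMr ?mul1r // ltr0n.
by rewrite mulrn_eq0 (negbTE (lt0n_neq0 p_gt0)) ?orbF ?andbT => /eqP r0; rewrite fx r0.
Qed.

End SmallArc.

Lemma compact_open_nbhs_cst (X Y : topologicalType) (y0 : Y)
    (S : set {compact-open, X -> Y}) :
  nbhs (cst y0 : {compact-open, X -> Y}) S ->
  exists K O, [/\ compact K, open O, O y0 &
                  [set h : {compact-open, X -> Y} | h @` K `<=` O] `<=` S].
Proof.
move=> Sy0.
pose D := [set i : set X * set Y | [/\ compact i.1, open i.2 & i.2 y0]].
pose B (i : set X * set Y) := [set h : {compact-open, X -> Y} | h @` i.1 `<=` i.2].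
have FF : Filter (filter_from D B).
  apply: filter_from_filter.
    by exists (set0, setT); split; [exact: compact0 | exact: openT |].
  move=> [K1 O1] [K2 O2] [cK1 oO1 O1y0] [cK2 oO2 O2y0].
  exists (K1 `|` K2, O1 `&` O2); first by split; [exact: compactU | exact: openI |].
  move=> h /= hKO; split=> _ [x Kx <-].
    by have [] := hKO (h x) (ex_intro2 _ _ x (or_introl Kx) erefl).
  by have [] := hKO (h x) (ex_intro2 _ _ x (or_intror Kx) erefl).
have : filter_from D B --> (cst y0 : {compact-open, X -> Y}).
  apply/compact_open_cvgP => K O cK oO KO.
  have [[k Kk]|K0] := pselect (exists k, K k).
    by exists (K, O) => //; split => //; apply: (KO _ (ex_intro2 _ _ k Kk erefl)).
  exists (set0, setT); first by split; [exact: compact0 | exact: openT |].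
  by move=> h _ t [x Kx _]; exfalso; apply: K0; exists x.
by move=> /(_ S Sy0) [[K O] [cK oO Oy0] BS]; exists K, O.
Qed.

Section Symplectic.
Variables (L : topologicalZmodType) (nabla : L -> dual L) (g : dual L -> L).
Hypothesis nablaK : cancel nabla g.
Hypothesis nablaVK : cancel g nabla.
Hypothesis nabla_cont : continuous nabla.
Hypothesis g_cont : continuous g.
Hypothesis nablaD : forall x y z : L,
  dual_val (nabla (x + y)) z = addT (dual_val (nabla x) z) (dual_val (nabla y) z).
Hypothesis nabla_alt : forall x : L, dual_val (nabla x) x = zeroT.

Definition omega x y := dual_val (nabla x) y.

Lemma omegaDl x y z : omega (x + y) z = addT (omega x z) (omega y z).
Proof. exact: nablaD. Qed.

Lemma omegaDr x y z : omega x (y + z) = addT (omega x y) (omega x z).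
Proof. exact: (dual_valP (nabla x)).2. Qed.

Lemma omega0r x : omega x 0 = zeroT.
Proof. exact: (is_char0 (dual_valP (nabla x))). Qed.

Lemma omega0l x : omega 0 x = zeroT.
Proof. by apply/esym/(@addTI (omega 0 x)); rewrite addT0 -omegaDl addr0. Qed.

Lemma omega_antisym x y : omega y x = oppT (omega x y).
Proof.
apply: addT_eq0; have := nabla_alt (x + y).
by rewrite -/(omega _ _) omegaDl !omegaDr /omega !nabla_alt add0T addT0.
Qed.

Lemma omega_eq0_sym x y : omega x y = zeroT -> omega y x = zeroT.
Proof. by move=> h; rewrite omega_antisym h oppT0. Qed.

Lemma subgroup_omega_eq0 x : subgroup [set y | omega x y = zeroT].
Proof.
split=> [|y z /= xy xz]; first exact: omega0r.
by rewrite omegaDr xy add0T /omega (is_charN _ (dual_valP _)) -/(omega x z) xz oppT0.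
Qed.

Lemma omega_surj (f : L -> T) : is_char f -> exists y, forall z, omega y z = f z.
Proof. by move=> hf; exists (g (char_of hf)) => z; rewrite /omega nablaVK. Qed.

Lemma omega_inj y y' : (forall z, omega y z = omega y' z) -> y = y'.
Proof.
move=> yy'; rewrite -(nablaK y) -(nablaK y'); congr g.
by apply: val_inj; apply: funext.
Qed.

Definition perp (S : set L) := [set x | forall y, S y -> omega x y = zeroT].

Definition isotropic (S : set L) := forall x y, S x -> S y -> omega x y = zeroT.

Lemma subgroup_perp S : subgroup (perp S).
Proof.
split=> [y _|x y Sx Sy z Sz]; first exact: omega0l.
by apply: omega_eq0_sym; apply: (subgroup_omega_eq0 z).2; apply: omega_eq0_sym;
  [apply: Sx | apply: Sy].
Qed.

Lemma isotropic_adjoin S x : subgroup S -> isotropic S -> perp S x -> isotropic (adjoin S x).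
Proof.
move=> hS iS px.
have perp_x : adjoin S x `<=` [set w | omega x w = zeroT].
  apply: adjoin_min; [exact: subgroup_omega_eq0 | by move=> s; apply: px | exact: nabla_alt].
have perp_m m : S m -> adjoin S x `<=` [set w | omega m w = zeroT].
  move=> Sm; apply: adjoin_min; [exact: subgroup_omega_eq0 | by move=> s; apply: iS |].
  by apply: omega_eq0_sym; apply: px.
move=> z w Sxz Sxw; apply: (adjoin_min (subgroup_omega_eq0 z) _ _ Sxw).
  by move=> m Sm; apply: omega_eq0_sym; apply: perp_m.
by apply: omega_eq0_sym; apply: perp_x.
Qed.

Lemma isotropic_bigcup_chain (F : set (set L)) :
  (forall X, F X -> isotropic X) -> total_on F subset -> isotropic (\bigcup_(X in F) X).
Proof.
move=> Fiso tot x y [X FX Xx] [Y FY Yy].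
have [XY|YX] := tot X Y FX FY; first by apply: (Fiso Y) => //; apply: XY.
by apply: (Fiso X) => //; apply: YX.
Qed.

Lemma perp_small O : nbhs (0 : L) O -> exists K, compact K /\ perp K `<=` O.
Proof.
move=> O0; have : nbhs (nabla 0) (g @^-1` O) by apply: g_cont; rewrite nablaK.
rewrite nbhsE => -[_ [[S oS <-] Snabla0] SO].
have nabla0E : (set_val (nabla 0) : {compact-open, L -> T}) = cst zeroT.
  by apply: funext => y; apply: omega0l.
have [K [U [cK _ U0 KU]]] : exists K U, [/\ compact K, open U, U zeroT &
    [set h : {compact-open, L -> T} | h @` K `<=` U] `<=` S].
  by apply: compact_open_nbhs_cst; rewrite -nabla0E; apply: open_nbhs_nbhs.
exists K; split => // x xK.
have : S (set_val (nabla x)) by apply: KU => _ [y Ky <-]; change (U (omega x y)); rewrite xK.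
by move/SO; rewrite /= nablaK.
Qed.

Section ExponentP.
Variable p : nat.
Hypothesis p_prime : prime p.
Hypothesis expL : forall x : L, x *+ p = 0.

Lemma open_perp K : compact K -> open (perp K).
Proof.
move=> cK; have p_gt0 := prime_gt0 p_prime.
pose S := [set h : {compact-open, L -> T} | h @` K `<=` small_arc p].
have oS : open S := compact_open_open cK (@open_small_arc p).
suff -> : perp K = nabla @^-1` (set_val @^-1` S).
  apply: (continuousP _).1 nabla_cont _ _.
  exact: (continuousP _).1 (@initial_continuous _ _ _) _ oS.
apply/seteqP; split => x /= xK.
  move=> _ [y Ky <-]; change (small_arc p (omega x y)).
  by rewrite xK //; exact: small_arc0 p_gt0.
move=> y Ky; apply: (is_char_small p_gt0 expL (dual_valP _)).
exact: xK (dual_val (nabla x) y) (ex_intro2 _ _ y Ky erefl).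
Qed.

Lemma exists_open_isotropic : LCA L -> exists O, [/\ nbhs 0 O, subgroup O & isotropic O].
Proof.
case=> _ /(_ 0 I) [V V0 [cV _]].
have {}V0 : nbhs (0 : L) V by move: V0; rewrite /within /=; apply: filterS => y; apply.
have [K [cK KV]] := perp_small V0.
exists (perp K `&` perp V); split.
- apply: open_nbhs_nbhs; split; first by apply: openI; apply: open_perp.
  by split => y _; apply: omega0l.
- split; first by split => y _; apply: omega0l.
  by move=> x y [Kx Vx] [Ky Vy]; split; apply: (subgroup_perp _).2.
- by move=> x y [_ Vx] [Ky _]; apply: Vx; apply: KV.
Qed.

Lemma exists_lagrangian : LCA L ->
  exists M, [/\ subgroup M, nbhs 0 M, isotropic M & perp M `<=` M].
Proof.
move=> LCA_L; have [U [U0 sU iU]] := exists_open_isotropic LCA_L.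
pose P X := [/\ subgroup X, isotropic X & U `<=` X].
have [||F F0 FP tot|M [[sM iM UM] Mmax]] := @Zorn_bigcup_nonempty _ P U.
- by exists 0; case: sU.
- by split.
- split; first by apply: subgroup_bigcup_chain => // X /FP [].
    by apply: isotropic_bigcup_chain => // X /FP [].
  by case: F0 => X FX; move=> x Ux; exists X => //; have [_ _] := FP X FX; apply.
exists M; split => //; first exact: filterS UM U0.
move=> x Mx; apply: contrapT => nMx; apply: (Mmax (adjoin M x)).
  split; first exact: sub_adjoin.
  by move=> /(_ x (adjoin_self x sM)).
split; [exact: subgroup_adjoin | exact: isotropic_adjoin |].
by move=> y /UM; apply: sub_adjoin.
Qed.

Section Lagrangian.
Variable M : set L.
Hypothesis M_subgroup : subgroup M.
Hypothesis M_open : nbhs 0 M.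
Hypothesis M_lagrangian : perp M `<=` M.

(* Extend [f] by zero on a complement of [B] containing the open subgroup [M]: the result is
   a continuous character, hence of the form [omega y], and [y] lies in [perp M = M]. *)
Lemma extend_on_disjoint (B : set L) (f : L -> T) :
  subgroup B -> (forall y, B y -> M y -> y = 0) ->
  (forall b1 b2, B b1 -> B b2 -> f (b1 + b2) = addT (f b1) (f b2)) ->
  exists2 y, M y & forall b, B b -> omega y b = f b.
Proof.
move=> sB BM0 fD.
have [N [sN MN BN0 BN]] := exists_complement_containing p_prime expL sB M_subgroup BM0.
pose G z := f (proj BN z).
have Gchar : is_char G.
  split; last by move=> z w; rewrite /G (projD BN sB sN BN0) fD //; apply: (projP BN _).1.
  apply: (continuous_periodic M_open) => z m Mm.
  by rewrite /G (proj_addr BN sB sN BN0) //; apply: MN.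
have [y yG] := omega_surj Gchar.
have Gb b : B b -> G b = f b by move=> Bb; rewrite /G (proj_id BN sB sN BN0).
exists y; last by move=> b Bb; rewrite yG Gb.
have B0 : B 0 by case: sB.
apply: M_lagrangian => m Mm; rewrite yG -(add0r m) /G (proj_addr BN sB sN BN0 _ (MN _ Mm)).
rewrite (proj_id BN sB sN BN0 B0).
by apply/esym/(@addTI (f 0)); rewrite addT0 -fD ?addr0.
Qed.

Lemma exists_isotropic_complement : isotropic M ->
  exists B, [/\ subgroup B, isotropic B, (forall y, B y -> M y -> y = 0)
              & forall z, sumset B M z].
Proof.
move=> iM.
pose P X := [/\ subgroup X, isotropic X & forall y, X y -> M y -> y = 0].
have [||F F0 FP tot|B [[sB iB BM0] Bmax]] := @Zorn_bigcup_nonempty _ P [set 0].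
- by exists 0.
- split; first by split => // x y -> ->; rewrite subr0.
    by move=> x y -> _; apply: omega0l.
  by move=> y ->.
- split; first by apply: subgroup_bigcup_chain => // X /FP [].
    by apply: isotropic_bigcup_chain => // X /FP [].
  by move=> y [X FX Xy] My; have [_ _] := FP X FX; apply.
exists B; split => // x; apply: contrapT => nx.
have [y My yx] : exists2 y, M y & forall b, B b -> omega y b = oppT (omega x b).
  by apply: extend_on_disjoint => // b1 b2 _ _; rewrite omegaDr oppTD.
have xyB : perp B (x + y) by move=> b Bb; rewrite omegaDl yx // addTN.
have nxy : ~ sumset M B (x + y).
  move=> [m Mm [b Bb mbxy]]; apply: nx; exists b => //; exists (m - y).
    exact: M_subgroup.2.
  by rewrite addrCA addrA mbxy addrK.
apply: (Bmax (adjoin B (x + y))).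
  split; first exact: sub_adjoin.
  move=> /(_ _ (adjoin_self (x + y) sB)) Bxy; apply: nxy.
  by exists 0; [case: M_subgroup | exists (x + y); rewrite ?add0r].
split; [exact: subgroup_adjoin | exact: isotropic_adjoin |].
exact: (adjoin_disjoint p_prime expL sB M_subgroup BM0 nxy).
Qed.

End Lagrangian.
End ExponentP.

Section LagrangianSplitting.
Variables (M B : set L).
Hypothesis M_subgroup : subgroup M.
Hypothesis M_open : nbhs 0 M.
Hypothesis M_isotropic : isotropic M.
Hypothesis M_lagrangian : perp M `<=` M.
Hypothesis B_subgroup : subgroup B.
Hypothesis B_isotropic : isotropic B.
Hypothesis BM_disjoint : forall y, B y -> M y -> y = 0.
Hypothesis BM_sum : forall z, sumset B M z.

Local Notation A := (discrete_subgroup (SubgroupType B_subgroup)).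

Definition projB (z : L) : A := exist _ (proj BM_sum z) (mem_set (projP BM_sum z).1).

Lemma projB_val (a : A) : projB (val a) = a.
Proof. by apply: val_inj; apply: (proj_id BM_sum) => //; exact: set_mem (valP a). Qed.

Lemma projB_addr z m : M m -> projB (z + m) = projB z.
Proof. by move=> Mm; apply: val_inj; apply: proj_addr. Qed.

Lemma projBD z w : projB (z + w) = projB z + projB w.
Proof. by apply: val_inj; apply: projD. Qed.

Lemma projB_continuous : continuous projB.
Proof. exact: continuous_periodic M_open projB_addr. Qed.

Lemma sub_projB z : M (z - val (projB z)).
Proof. exact: (projP BM_sum z).2. Qed.

Lemma val_continuous : continuous (val : A -> L).
Proof. exact: continuous_discrete. Qed.

Lemma valD (a b : A) : val (a + b) = val a + val b.
Proof. by []. Qed.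

Local Notation lift chi := (g (dualmap projB_continuous projBD chi)).
Local Notation restr x := (dualmap val_continuous valD (nabla x)).

Lemma omega_lift chi z : omega (lift chi) z = dual_val chi (projB z).
Proof. by rewrite /omega nablaVK dualmapE. Qed.

Lemma lift_in_M chi : M (lift chi).
Proof.
apply: M_lagrangian => m Mm; rewrite omega_lift -(add0r m) projB_addr //.
have projB0 : projB 0 = 0 := projB_val 0.
by rewrite projB0 (is_char0 (dual_valP chi)).
Qed.

Definition split_iso (u : A * dual A) : L := val u.1 + lift u.2.

Definition split_inv (z : L) : A * dual A := (projB z, restr (z - val (projB z))).

Lemma split_isoK : cancel split_iso split_inv.
Proof.
move=> [a chi]; have projB_iso : projB (split_iso (a, chi)) = a.
  by rewrite /split_iso projB_addr; [exact: projB_val | exact: lift_in_M].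
rewrite /split_inv projB_iso; congr pair.
have -> : split_iso (a, chi) - val a = lift chi by rewrite /split_iso addrC addKr.
apply: val_inj; apply: funext => a' /=.
change (omega (lift chi) (val a') = dual_val chi a').
by rewrite omega_lift projB_val.
Qed.

Lemma split_invK : cancel split_inv split_iso.
Proof.
move=> z; rewrite /split_iso /split_inv /=.
set m := z - val (projB z).
suff -> : lift (restr m) = m by rewrite addrC subrK.
apply: omega_inj => w; rewrite omega_lift dualmapE.
change (omega m (val (projB w)) = omega m w).
rewrite -[in RHS](subrK (val (projB w)) w) omegaDr.
by rewrite (M_isotropic (sub_projB z) (sub_projB w)) add0T.
Qed.

Lemma split_iso_continuous : continuous split_iso.
Proof.
move=> u; apply: (@continuous_comp _ _ _ (fun u : A * dual A => (val u.1, lift u.2))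
  (fun z : L * L => z.1 + z.2)); last exact: add_continuous.
apply: cvg_pair; first by apply: continuous_comp; [exact: cvg_fst | exact: val_continuous].
apply: (@continuous_comp _ _ _ snd (fun chi => lift chi)); first exact: cvg_snd.
apply: (@continuous_comp _ _ _ (dualmap projB_continuous projBD) g).
  exact: dualmap_continuous.
exact: g_cont.
Qed.

Lemma split_inv_continuous : continuous split_inv.
Proof.
move=> z; apply: (@cvg_pair _ _ _ (nbhs z) (nbhs (projB z))
  (nbhs (restr (z - val (projB z))))); first exact: projB_continuous.
apply: continuous_comp; last exact: dualmap_continuous.
apply: continuous_comp; last exact: nabla_cont.
apply: (@continuous_comp _ _ _ (fun z => (z, val (projB z))) (fun z : L * L => z.1 - z.2)).
  apply: cvg_pair; first exact: cvg_id.
  by apply: continuous_comp; [exact: projB_continuous | exact: val_continuous].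
exact: sub_continuous.
Qed.

Lemma split_isoD (u v w : A * dual A) : w.1 = u.1 + v.1 ->
  (forall a, dual_val w.2 a = addT (dual_val u.2 a) (dual_val v.2 a)) ->
  split_iso w = split_iso u + split_iso v.
Proof.
move=> w1 w2; have lift_w : lift w.2 = lift u.2 + lift v.2.
  by apply: omega_inj => z; rewrite omegaDl !omega_lift w2.
by rewrite /split_iso w1 valD lift_w addrACA.
Qed.

Lemma omega_split_iso u v : omega (split_iso u) (split_iso v) = std_nabla u v.
Proof.
move: u v => [a chi] [b chi']; rewrite /split_iso /std_nabla /=.
rewrite omegaDl !omegaDr.
rewrite (B_isotropic (set_mem (valP a)) (set_mem (valP b))).
rewrite (M_isotropic (lift_in_M chi) (lift_in_M chi')).
rewrite [omega _ (lift chi')]omega_antisym !omega_lift !projB_val.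
by rewrite add0T addT0 addTC.
Qed.

Lemma standard_of_lagrangian_splitting : is_standard nabla.
Proof.
exists A, split_iso; split.
- exact: LCA_discrete_subgroup.
- split; first exact: split_iso_continuous.
  by exists split_inv; split; [exact: split_isoK | exact: split_invK | exact: split_inv_continuous].
- exact: split_isoD.
- exact: omega_split_iso.
Qed.

End LagrangianSplitting.
End Symplectic.

Theorem theorem4p5 (p : nat) (L : topologicalZmodType) (nabla : L -> dual L) :
  prime p ->
  LCA L ->
  (forall x : L, x != 0 ->
     x *+ p = 0 /\ (forall k : nat, (0 < k < p)%N -> x *+ k != 0)) ->
  symplectic_self_duality nabla ->
  is_standard nabla.
Proof.
move=> p_prime LCA_L exp_p [[nabla_cont [g [nablaK nablaVK g_cont]]] nablaD nabla_alt].
have expL (x : L) : x *+ p = 0.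
  by have [->|/exp_p[]//] := eqVneq x 0; rewrite mul0rn.
have [M [sM M0 iM pM]] :=
  exists_lagrangian nablaK nabla_cont g_cont nablaD nabla_alt p_prime expL LCA_L.
have [B [sB iB BM0 BM]] :=
  exists_isotropic_complement nablaVK nablaD nabla_alt p_prime expL sM M0 pM iM.
exact: (standard_of_lagrangian_splitting nablaK nablaVK nabla_cont g_cont nablaD nabla_alt
  sM M0 iM pM sB iB BM0 BM).
Qed.
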